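(* There exists a topological group $G$ which is a $k$-space and has countable $cs^{\ast}$-character, but is not sequential. (For instance, $G=F(\beta D)$ or $G=A(\beta D)$, where $\beta D$ is the Stone–Čech compactification of an infinite discrete space $D$.) *)

From Stdlib Require Import Arith.

Set Implicit Arguments.

Definition is_topology (X : Type) (op : (X -> Prop) -> Prop) : Prop :=
  op (fun _ => True) /\
  (forall F : (X -> Prop) -> Prop,
      (forall U, F U -> op U) -> op (fun x => exists U, F U /\ U x)) /\
  (forall U V, op U -> op V -> op (fun x => U x /\ V x)).

Definition is_closed (X : Type) (op : (X -> Prop) -> Prop) (A : X -> Prop) : Prop :=
  op (fun x => ~ A x).

Definition hausdorff (X : Type) (op : (X -> Prop) -> Prop) : Prop :=
  forall x y : X, x <> y ->
    exists U V, op U /\ op V /\ U x /\ V y /\ (forall z, U z -> V z -> False).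

(* Continuity of a binary map X * X -> Y, X*X carrying the product topology
   (basic open rectangles U x V). *)
Definition continuous2 (X Y : Type) (opX : (X -> Prop) -> Prop)
  (opY : (Y -> Prop) -> Prop) (f : X -> X -> Y) : Prop :=
  forall a b (W : Y -> Prop), opY W -> W (f a b) ->
    exists U V, opX U /\ opX V /\ U a /\ V b /\
      (forall x y, U x -> V y -> W (f x y)).

Definition continuous (X Y : Type) (opX : (X -> Prop) -> Prop)
  (opY : (Y -> Prop) -> Prop) (f : X -> Y) : Prop :=
  forall W, opY W -> opX (fun x => W (f x)).

Definition topological_group (G : Type) (op : (G -> Prop) -> Prop)
  (mul : G -> G -> G) (inv : G -> G) (e : G) : Prop :=
  is_topology op /\ hausdorff op /\
  (forall x y z, mul x (mul y z) = mul (mul x y) z) /\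
  (forall x, mul e x = x) /\ (forall x, mul x e = x) /\
  (forall x, mul (inv x) x = e) /\ (forall x, mul x (inv x) = e) /\
  continuous2 op op mul /\ continuous op op inv.

Definition compact_set (X : Type) (op : (X -> Prop) -> Prop) (K : X -> Prop) : Prop :=
  forall F : (X -> Prop) -> Prop,
    (forall U, F U -> op U) ->
    (forall x, K x -> exists U, F U /\ U x) ->
    exists l : list (X -> Prop),
      (forall U, List.In U l -> F U) /\
      (forall x, K x -> exists U, List.In U l /\ U x).

Definition k_space (X : Type) (op : (X -> Prop) -> Prop) : Prop :=
  forall A : X -> Prop,
    (forall K, compact_set op K ->
       exists C, is_closed op C /\ (forall x, K x -> (A x <-> C x))) ->
    is_closed op A.

Definition converges (X : Type) (op : (X -> Prop) -> Prop) (s : nat -> X) (x : X) : Prop :=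
  forall U, op U -> U x -> exists N, forall n, N <= n -> U (s n).

Definition seq_closed (X : Type) (op : (X -> Prop) -> Prop) (A : X -> Prop) : Prop :=
  forall (s : nat -> X) x, (forall n, A (s n)) -> converges op s x -> A x.

Definition sequential (X : Type) (op : (X -> Prop) -> Prop) : Prop :=
  forall A, seq_closed op A -> is_closed op A.

Definition cs_star_network_at (X : Type) (op : (X -> Prop) -> Prop)
  (Nf : (X -> Prop) -> Prop) (x : X) : Prop :=
  forall (s : nat -> X) (O : X -> Prop), converges op s x -> op O -> O x ->
    exists N, Nf N /\ N x /\ (forall y, N y -> O y) /\
      (forall m, exists n, m <= n /\ N (s n)).

(* Countable cs*-character: every point has a countable cs*-network
   (countable families are enumerated by nat, repetitions allowed). *)
Definition countable_cs_star_character (X : Type) (op : (X -> Prop) -> Prop) : Prop :=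
  forall x : X, exists f : nat -> (X -> Prop),
    cs_star_network_at op (fun N => exists i, N = f i) x.

(* The example is the free Boolean group over βℕ with its k_ω-topology. An element is a finite
   sum of ultrafilters on ℕ, represented by its parities on the clopen sets A* of βℕ; a set is
   open iff its trace on each A_n(βℕ) (sums of at most n ultrafilters, compact for the pointwise
   topology) is relatively open. This is a k-space by construction, and a topological group
   because compact layers can be stacked into a neighbourhood P of 0 with P + P inside any given
   neighbourhood. Combinatorics of ultrafilters shows that a convergent sequence is eventually
   bounded in some A_n(βℕ) and then hits its limit infinitely often; hence singletons form
   cs*-networks and the set of nonzero elements is sequentially closed, although 0 lies in its
   closure. *)

From Stdlib Require Import Arith Lia List Bool Classical ClassicalEpsilon
  FunctionalExtensionality PropExtensionality ProofIrrelevance.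
From mathcomp Require classical_sets filter.
Import ListNotations.

Definition natset : Type := nat -> Prop.

Definition is_ultrafilter (p : natset -> Prop) : Prop :=
  p (fun _ => True) /\ ~ p (fun _ => False) /\
  (forall A B : natset, (forall n, A n -> B n) -> p A -> p B) /\
  (forall A B, p A -> p B -> p (fun n => A n /\ B n)) /\
  (forall A, p A \/ p (fun n => ~ A n)).

Section Ultrafilter.
Variable p : natset -> Prop.
Hypothesis Hp : is_ultrafilter p.

Lemma ultra_full : p (fun _ => True). Proof. apply Hp. Qed.
Lemma ultra_not_empty : ~ p (fun _ => False). Proof. apply Hp. Qed.
Lemma ultra_mono A B : (forall n, A n -> B n) -> p A -> p B. Proof. apply Hp. Qed.
Lemma ultra_meet A B : p A -> p B -> p (fun n => A n /\ B n). Proof. apply Hp. Qed.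
Lemma ultra_dichotomy A : p A \/ p (fun n => ~ A n). Proof. apply Hp. Qed.

Lemma ultra_meet_mono A B C : (forall n, A n -> B n -> C n) -> p A -> p B -> p C.
Proof. intros H HA HB. apply (ultra_mono _ _ (fun n '(conj a b) => H n a b)), ultra_meet; auto. Qed.

Lemma ultra_compl A : p A -> ~ p (fun n => ~ A n).
Proof.
  intros HA HnA. apply ultra_not_empty.
  eapply ultra_meet_mono; [|exact HA|exact HnA]. intros n a na; exact (na a).
Qed.

Lemma ultra_not_iff_compl A : ~ p A <-> p (fun n => ~ A n).
Proof.
  split; [intros H; destruct (ultra_dichotomy A); tauto|].
  intros H1 H2. exact (ultra_compl A H2 H1).
Qed.

Lemma ultra_join A B : p (fun n => A n \/ B n) -> p A \/ p B.
Proof.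
  intros H. apply NNPP. intros Hn.
  apply not_or_and in Hn as [HA HB].
  apply ultra_not_iff_compl in HA, HB.
  apply (ultra_compl _ H). eapply ultra_meet_mono; [|exact HA|exact HB].
  intros n a b [x|y]; [exact (a x)|exact (b y)].
Qed.

Lemma ultra_big_meet (Es : list natset) : (forall E, In E Es -> p E) ->
  p (fun n => forall E, In E Es -> E n).
Proof.
  induction Es as [|E Es IH]; intros H.
  - eapply ultra_mono; [|apply ultra_full]. intros n _ E [].
  - apply (ultra_meet_mono E (fun n => forall E', In E' Es -> E' n)).
    + intros n HE HEs E' [<-|HE']; [exact HE|exact (HEs E' HE')].
    + apply H; left; auto.
    + apply IH. intros E' HE'. apply H; right; auto.
Qed.

Lemma ultra_meet_below (E : nat -> natset) i : (forall j, j < i -> p (E j)) ->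
  p (fun n => forall j, j < i -> E j n).
Proof.
  induction i as [|i IH]; intros H.
  - eapply ultra_mono; [|apply ultra_full]. intros n _ j Hj; lia.
  - apply (ultra_meet_mono (E i) (fun n => forall j, j < i -> E j n)).
    + intros n Ei Ej j Hj. destruct (Nat.eq_dec j i) as [->|]; auto. apply Ej; lia.
    + apply H; lia.
    + apply IH. intros j Hj; apply H; lia.
Qed.

Lemma ultra_finite_cover (Es : list natset) : (forall n, exists E, In E Es /\ E n) ->
  exists E, In E Es /\ p E.
Proof.
  intros H. apply NNPP; intro Hn.
  assert (Hall : p (fun n => forall E', In E' (map (fun E n => ~ E n) Es) -> E' n)).
  { apply ultra_big_meet. intros E' HE'. apply in_map_iff in HE' as [E [<- HE]].
    apply ultra_not_iff_compl. intro; apply Hn; eauto. }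
  apply ultra_not_empty. eapply ultra_mono; [|exact Hall]. intros n Hn'.
  destruct (H n) as [E [HE En]]. exact (Hn' _ (in_map (fun E n => ~ E n) _ _ HE) En).
Qed.

Lemma ultra_atom (B : list natset) : p (fun n => forall A, In A B -> (A n <-> p A)).
Proof.
  induction B as [|A B IH].
  - eapply ultra_mono; [|apply ultra_full]. intros n _ A [].
  - destruct (classic (p A)) as [HA|HA].
    + eapply (ultra_meet_mono A); [|exact HA|exact IH].
      intros n a h A' [<-|HA']; [tauto|auto].
    + pose proof (proj1 (ultra_not_iff_compl A) HA) as HnA.
      eapply ultra_meet_mono; [|exact HnA|exact IH].
      intros n a h A' [<-|HA']; cbv beta in *; [tauto|auto].
Qed.
End Ultrafilter.

Lemma ultra_atom_iff p q B A : is_ultrafilter q ->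
  q (fun n => forall A, In A B -> (A n <-> p A)) -> In A B -> (q A <-> p A).
Proof.
  intros Hq HE HA. destruct (classic (p A)) as [pA|pA].
  - split; auto. intros _. eapply (ultra_mono q Hq); [|exact HE]. intros n Hn. apply Hn; auto.
  - split; [|tauto]. intros qA. exfalso. apply (ultra_compl q Hq A qA).
    eapply (ultra_mono q Hq); [|exact HE]. intros n Hn An. apply pA, (Hn A HA), An.
Qed.

Lemma ultrafilter_extends (F : natset -> Prop) :
  F (fun _ => True) ->
  (forall A B, F A -> F B -> F (fun n => A n /\ B n)) ->
  (forall A B : natset, (forall n, A n -> B n) -> F A -> F B) ->
  ~ F (fun _ => False) ->
  exists p, is_ultrafilter p /\ forall A, F A -> p A.
Proof.
  intros HT HI HS H0.
  assert (PF : filter.ProperFilter F) by (split; [exact H0|split; auto]).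
  destruct (filter.ultraFilterLemma PF) as [p [Up Fp]].
  pose proof (filter.ultra_proper (F := p)) as PP.
  exists p. split; [|exact Fp].
  split; [|split; [|split; [|split]]].
  - apply filter.filterT.
  - exact (filter.filter_not_empty p).
  - intros A B AB. apply filter.filterS. exact AB.
  - intros A B. apply filter.filterI.
  - intros A. exact (filter.in_ultra_setVsetC A Up).
Qed.

(* Compactness of βℕ, for covers by basic open sets. *)
Lemma ultra_compact (good : natset -> Prop) :
  (forall p, is_ultrafilter p -> exists E, good E /\ p E) ->
  exists Es, (forall E, In E Es -> good E) /\ forall n, exists E, In E Es /\ E n.
Proof.
  intros Hgood. apply NNPP; intro Hno.
  set (F := fun A : natset => exists Es, (forall E, In E Es -> good E) /\
              forall n, (forall E, In E Es -> ~ E n) -> A n).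
  destruct (ultrafilter_extends F) as [q [Hq HFq]].
  - exists []. split; [intros ? []|auto].
  - intros A B [E1 [G1 H1]] [E2 [G2 H2]]. exists (E1 ++ E2). split.
    + intros E HE; apply in_app_or in HE as [HE|HE]; auto.
    + intros n Hn. split; [apply H1|apply H2]; intros E HE; apply Hn, in_or_app; auto.
  - intros A B HAB [Es [G H]]. exists Es; split; auto.
  - intros [Es [G H]]. apply Hno. exists Es. split; auto. intros n.
    apply NNPP; intro Hn. apply (H n). intros E HE En. apply Hn; eauto.
  - destruct (Hgood q Hq) as [E [HE qE]].
    apply (ultra_compl q Hq E qE), HFq. exists [E]. split.
    + intros E' [<-|[]]; auto.
    + intros n Hn. apply Hn. left; auto.
Qed.

Lemma principal_ultrafilter (a : nat) : is_ultrafilter (fun A => A a).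
Proof. repeat split; auto. intros A. apply classic. Qed.

Lemma ultra_separate p q : is_ultrafilter p -> is_ultrafilter q -> p <> q ->
  exists A, p A /\ ~ q A.
Proof.
  intros Hp Hq Hne. apply NNPP; intro Hc. apply Hne.
  apply functional_extensionality; intros A. apply propositional_extensionality.
  split; intros HA; apply NNPP; intro HB; apply Hc.
  - eauto.
  - exists (fun n => ~ A n). split.
    + apply ultra_not_iff_compl; auto.
    + exact (ultra_compl q Hq A HA).
Qed.

Lemma ultra_separate4 a b c d :
  is_ultrafilter a -> is_ultrafilter b -> is_ultrafilter c -> is_ultrafilter d ->
  a <> c -> a <> d -> b <> c -> b <> d -> exists W, a W /\ b W /\ ~ c W /\ ~ d W.
Proof.
  intros Ha Hb Hc Hd H1 H2 H3 H4.
  destruct (ultra_separate a c Ha Hc H1) as [X1 [X1a X1c]].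
  destruct (ultra_separate a d Ha Hd H2) as [X2 [X2a X2d]].
  destruct (ultra_separate b c Hb Hc H3) as [X3 [X3b X3c]].
  destruct (ultra_separate b d Hb Hd H4) as [X4 [X4b X4d]].
  exists (fun n => (X1 n /\ X2 n) \/ (X3 n /\ X4 n)). repeat split.
  - apply (ultra_meet_mono a Ha X1 X2); [cbv beta; tauto|exact X1a|exact X2a].
  - apply (ultra_meet_mono b Hb X3 X4); [cbv beta; tauto|exact X3b|exact X4b].
  - intro H. destruct (ultra_join c Hc _ _ H) as [H'|H'].
    + apply X1c. eapply (ultra_mono c Hc); [|exact H']. intros n [x _]; exact x.
    + apply X3c. eapply (ultra_mono c Hc); [|exact H']. intros n [x _]; exact x.
  - intro H. destruct (ultra_join d Hd _ _ H) as [H'|H'].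
    + apply X2d. eapply (ultra_mono d Hd); [|exact H']. intros n [_ x]; exact x.
    + apply X4d. eapply (ultra_mono d Hd); [|exact H']. intros n [_ x]; exact x.
Qed.

Definition truth (P : Prop) : bool := if excluded_middle_informative P then true else false.

Lemma truth_true P : truth P = true <-> P.
Proof. unfold truth; destruct excluded_middle_informative; split; auto; discriminate. Qed.

Lemma truth_false P : truth P = false <-> ~ P.
Proof. unfold truth; destruct excluded_middle_informative; split; intuition; discriminate. Qed.

Lemma truth_iff P Q : (P <-> Q) -> truth P = truth Q.
Proof.
  intros H. unfold truth.
  destruct (excluded_middle_informative P), (excluded_middle_informative Q); tauto.
Qed.

Definition word : Type := list (natset -> Prop).

(* A word [p1; ...; pk] of ultrafilters stands for p1 + ... + pk in the free Boolean group
   over βℕ; it is evaluated on each basic clopen set A* of βℕ, giving the parity of the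
   number of letters containing A. *)
Definition word_eval (w : word) (A : natset) : bool :=
  fold_right (fun p b => xorb (truth (p A)) b) false w.

Lemma word_eval_app w1 w2 A : word_eval (w1 ++ w2) A = xorb (word_eval w1 A) (word_eval w2 A).
Proof. induction w1; simpl; [reflexivity|]. rewrite IHw1. symmetry; apply xorb_assoc. Qed.

Lemma word_eval_single p A : word_eval [p] A = truth (p A).
Proof. apply xorb_false_r. Qed.

Lemma word_eval_full w : Forall is_ultrafilter w ->
  word_eval w (fun _ => True) = Nat.odd (length w).
Proof.
  induction 1 as [|p w Hp Hw IH]; simpl; auto. rewrite IH.
  rewrite (proj2 (truth_true _) (ultra_full p Hp)).
  rewrite Nat.odd_succ, <- Nat.negb_odd. reflexivity.
Qed.

Definition word_restrict (C : natset) (w : word) : word := filter (fun p => truth (p C)) w.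

Lemma word_eval_restrict C w B : Forall is_ultrafilter w ->
  word_eval (word_restrict C w) B = word_eval w (fun n => B n /\ C n).
Proof.
  induction 1 as [|p w Hp Hw IH]; simpl; auto. unfold word_restrict in *.
  destruct (classic (p C)) as [HC|HC].
  - rewrite (proj2 (truth_true _) HC). simpl. rewrite IH. f_equal. apply truth_iff. split.
    + intro HB. apply (ultra_meet p Hp); auto.
    + apply (ultra_mono p Hp). intros n [b _]; exact b.
  - rewrite (proj2 (truth_false _) HC), IH.
    rewrite (proj2 (truth_false (p (fun n => B n /\ C n)))); [reflexivity|].
    intro H. apply HC. eapply (ultra_mono p Hp); [|exact H]. intros n [_ c]; exact c.
Qed.

Lemma word_restrict_shorter C w : (exists p, In p w /\ ~ p C) ->
  length (word_restrict C w) < length w.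
Proof.
  unfold word_restrict. induction w as [|a w IH]; intros [p [Hin Hp]]; [destruct Hin|].
  simpl. destruct Hin as [<-|Hin].
  - rewrite (proj2 (truth_false _) Hp). apply Nat.lt_succ_r, filter_length_le.
  - destruct (truth (a C)); simpl.
    + specialize (IH (ex_intro _ p (conj Hin Hp))). lia.
    + apply Nat.lt_succ_r, filter_length_le.
Qed.

Lemma word_reduce (w : word) : Forall is_ultrafilter w ->
  exists w', NoDup w' /\ Forall is_ultrafilter w' /\ length w' <= length w /\
    forall A, word_eval w' A = word_eval w A.
Proof.
  induction 1 as [|p w Hp Hw IH].
  - exists []. repeat split; auto. constructor.
  - destruct IH as [w' [N' [F' [L' E']]]].
    destruct (classic (In p w')) as [Hin|Hin].
    + destruct (in_split _ _ Hin) as [w1 [w2 ->]].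
      exists (w1 ++ w2). rewrite Forall_forall in F' |- *.
      split; [|split; [|split]].
      * eapply NoDup_remove_1; eauto.
      * intros r Hr. apply F'.
        apply in_app_or in Hr as [Hr|Hr]; apply in_or_app; [left|right; right]; auto.
      * rewrite length_app in *. simpl in *. lia.
      * intros A. simpl. rewrite <- E', !word_eval_app. simpl.
        destruct (word_eval w1 A), (truth (p A)), (word_eval w2 A); reflexivity.
    + exists (p :: w'). split; [|split; [|split]].
      * constructor; auto.
      * constructor; auto.
      * simpl; lia.
      * intros A; simpl; rewrite E'; auto.
Qed.

Definition bgroup : Type :=
  {h : natset -> bool | exists w, Forall is_ultrafilter w /\ h = word_eval w}.

Definition coord (g : bgroup) : natset -> bool := proj1_sig g.

Lemma bgroup_ext (g h : bgroup) : (forall A, coord g A = coord h A) -> g = h.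
Proof.
  destruct g as [g pg], h as [h ph]; simpl; intros E.
  apply functional_extensionality in E. subst. f_equal. apply proof_irrelevance.
Qed.

Lemma bgroup_neq_coord (g h : bgroup) : g <> h -> exists A, coord g A <> coord h A.
Proof.
  intros Hne. apply NNPP; intro Hn. apply Hne, bgroup_ext.
  intros A. apply NNPP; intro; eauto.
Qed.

Definition word_elt (w : word) (H : Forall is_ultrafilter w) : bgroup :=
  exist _ (word_eval w) (ex_intro _ w (conj H eq_refl)).

Definition bzero : bgroup := word_elt [] (Forall_nil _).

Lemma bmul_spec (g h : bgroup) : exists w, Forall is_ultrafilter w /\
  (fun A => xorb (coord g A) (coord h A)) = word_eval w.
Proof.
  destruct g as [g [w1 [F1 ->]]], h as [h [w2 [F2 ->]]]; simpl.
  exists (w1 ++ w2). split; [apply Forall_app; auto|].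
  apply functional_extensionality; intros A. now rewrite word_eval_app.
Qed.

Definition bmul (g h : bgroup) : bgroup := exist _ _ (bmul_spec g h).

Lemma coord_bmul g h A : coord (bmul g h) A = xorb (coord g A) (coord h A).
Proof. reflexivity. Qed.

Lemma coord_bzero A : coord bzero A = false.
Proof. reflexivity. Qed.

Lemma bmul_assoc x y z : bmul x (bmul y z) = bmul (bmul x y) z.
Proof. apply bgroup_ext; intros; rewrite !coord_bmul; symmetry; apply xorb_assoc. Qed.

Lemma bmul_0l x : bmul bzero x = x.
Proof. apply bgroup_ext; reflexivity. Qed.

Lemma bmul_0r x : bmul x bzero = x.
Proof. apply bgroup_ext; intros; apply xorb_false_r. Qed.

Lemma bmul_self x : bmul x x = bzero.
Proof. apply bgroup_ext; intros; apply xorb_nilpotent. Qed.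

Definition words_le (n : nat) (g : bgroup) : Prop :=
  exists w, Forall is_ultrafilter w /\ length w <= n /\ coord g = word_eval w.

Lemma words_le_mono n m g : n <= m -> words_le n g -> words_le m g.
Proof. intros H [w [F [L E]]]. exists w; repeat split; auto; lia. Qed.

Lemma words_le_bmul n m g h : words_le n g -> words_le m h -> words_le (n + m) (bmul g h).
Proof.
  intros [w1 [F1 [L1 E1]]] [w2 [F2 [L2 E2]]]. exists (w1 ++ w2). repeat split.
  - apply Forall_app; auto.
  - rewrite length_app; lia.
  - apply functional_extensionality; intros A.
    rewrite coord_bmul, E1, E2, word_eval_app. reflexivity.
Qed.

Lemma words_le_some g : exists n, words_le n g.
Proof. destruct g as [g [w [F E]]]. exists (length w), w. auto. Qed.

Lemma words_le_zero n : words_le n bzero.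
Proof. exists []. simpl; repeat split; auto; lia. Qed.

Lemma words_le_0 g : words_le 0 g -> g = bzero.
Proof.
  intros [w [_ [L E]]]. destruct w; simpl in L; [|lia].
  apply bgroup_ext. intros A. rewrite E. reflexivity.
Qed.

Lemma words_le_1 g : words_le 1 g ->
  g = bzero \/ exists p, is_ultrafilter p /\ coord g = word_eval [p].
Proof.
  intros [w [F [L E]]]. destruct w as [|p [|q w]]; simpl in L; try lia.
  - left. apply words_le_0. exists []. simpl; auto.
  - right. exists p. inversion F; auto.
Qed.

Lemma words_le_S n g : words_le (S n) g <->
  exists x y, words_le n x /\ words_le 1 y /\ g = bmul x y.
Proof.
  split.
  - intros [w [Fw [L E]]]. destruct w as [|p w].
    + exists g, bzero. split; [|split; [apply words_le_zero|symmetry; apply bmul_0r]].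
      exists []. simpl; repeat split; auto; lia.
    + inversion Fw as [|? ? Hp Hw]; subst.
      exists (word_elt w Hw), (word_elt [p] (Forall_cons _ Hp (Forall_nil _))).
      split; [exists w; simpl in L; repeat split; auto; lia|].
      split; [exists [p]; simpl; repeat split; auto|].
      apply bgroup_ext. intros A. rewrite coord_bmul, E.
      cbn [coord proj1_sig word_elt word_eval fold_right].
      rewrite xorb_false_r. apply xorb_comm.
  - intros [x [y [Hx [Hy ->]]]]. replace (S n) with (n + 1) by lia. apply words_le_bmul; auto.
Qed.

Lemma list_choice {X Y} (R : X -> Y -> Prop) (l : list X) :
  (forall x, In x l -> exists y, R x y) ->
  exists ly, (forall y, In y ly -> exists x, In x l /\ R x y) /\
             (forall x, In x l -> exists y, In y ly /\ R x y).
Proof.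
  induction l as [|a l IH]; intros H.
  - exists []. split; intros ? [].
  - destruct (H a (or_introl eq_refl)) as [ya Ha].
    destruct IH as [ly [H1 H2]]; [intros; apply H; right; auto|].
    exists (ya :: ly). split.
    + intros y [<-|Hy]; [exists a; split; auto; left; auto|].
      destruct (H1 y Hy) as [x [Hx Rx]]; exists x; split; auto; right; auto.
    + intros x [<-|Hx]; [exists ya; split; auto; left; auto|].
      destruct (H2 x Hx) as [y [Hy Ry]]; exists y; split; auto; right; auto.
Qed.

Definition agree (B : list natset) (g g' : bgroup) : Prop :=
  forall A, In A B -> coord g' A = coord g A.

Definition pw_open (V : bgroup -> Prop) : Prop :=
  forall g, V g -> exists B, forall g', agree B g g' -> V g'.

Definition pw_compact : (bgroup -> Prop) -> Prop := compact_set pw_open.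

Lemma agree_refl B g : agree B g g.
Proof. intros A _; auto. Qed.

Lemma agree_sym B g h : agree B g h -> agree B h g.
Proof. intros H A HA; symmetry; auto. Qed.

Lemma agree_trans B g h k : agree B g h -> agree B h k -> agree B g k.
Proof. intros H1 H2 A HA. rewrite H2, H1; auto. Qed.

Lemma agree_sub B B' g h : (forall A, In A B -> In A B') -> agree B' g h -> agree B g h.
Proof. intros S H A HA; auto. Qed.

Lemma agree_bmul B x x' y y' : agree B x x' -> agree B y y' -> agree B (bmul x y) (bmul x' y').
Proof. intros H1 H2 A HA. rewrite !coord_bmul, H1, H2; auto. Qed.

Lemma pw_open_agree B x : pw_open (agree B x).
Proof. intros g Hg. exists B. intros g' H. eapply agree_trans; eauto. Qed.

Lemma pw_open_coord A b : pw_open (fun g => coord g A = b).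
Proof. intros g Hg. exists [A]. intros g' H. rewrite <- Hg. apply H. left; auto. Qed.

Lemma pw_open_translate V c : pw_open V -> pw_open (fun g => V (bmul g c)).
Proof.
  intros H g Hg. destruct (H _ Hg) as [B HB]. exists B. intros g' Ha.
  apply HB, agree_bmul; [exact Ha|apply agree_refl].
Qed.

Lemma pw_open_avoid_list (l : list bgroup) : pw_open (fun g => forall h, In h l -> g <> h).
Proof.
  intros g Hg.
  destruct (list_choice (fun h A => coord g A <> coord h A) l) as [B [_ HB]].
  { intros h Hh. apply bgroup_neq_coord, Hg, Hh. }
  exists B. intros g' Hg' h Hh ->. destruct (HB h Hh) as [A [HA HA']].
  apply HA'. symmetry. apply Hg'; auto.
Qed.

Definition cover_coords {D : Type} (l : list (bgroup * list natset * D)) : list natset :=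
  concat (map (fun t => let '(_, B, _) := t in B) l).

Lemma agree_cover_coords {D : Type} (l : list (bgroup * list natset * D)) x B d g h :
  In (x, B, d) l -> agree (cover_coords l) g h -> agree B g h.
Proof.
  intros Hin. apply agree_sub. intros A HA. apply in_concat. exists B. split; auto.
  apply in_map_iff. exists (x, B, d); auto.
Qed.

Lemma pw_compact_basic_subcover {D : Type} (C : bgroup -> Prop)
  (Q : bgroup -> list natset -> D -> Prop) :
  pw_compact C -> (forall x, C x -> exists B d, Q x B d) ->
  exists l : list (bgroup * list natset * D),
    (forall x B d, In (x, B, d) l -> C x /\ Q x B d) /\
    (forall x', C x' -> exists x B d, In (x, B, d) l /\ agree B x x').
Proof.
  intros HC HQ.
  set (F := fun Vs => exists x B d, C x /\ Q x B d /\ Vs = agree B x).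
  destruct (HC F) as [l0 [Hl0 Hcov]].
  - intros Vs [x [B [d [_ [_ ->]]]]]. apply pw_open_agree.
  - intros x Hx. destruct (HQ x Hx) as [B [d HB]]. exists (agree B x).
    split; [exists x, B, d; auto|apply agree_refl].
  - destruct (list_choice (fun Vs (t : bgroup * list natset * D) => let '(x, B, d) := t in
        C x /\ Q x B d /\ Vs = agree B x) l0) as [l [H1 H2]].
    + intros Vs HVs. destruct (Hl0 Vs HVs) as [x [B [d H]]]. exists (x, B, d); auto.
    + exists l. split.
      * intros x B d Hin. destruct (H1 _ Hin) as [Vs [_ [? [? _]]]]. auto.
      * intros x' Hx'. destruct (Hcov x' Hx') as [Vs [HVs Hx]].
        destruct (H2 Vs HVs) as [[[x B] d] [Hin [_ [_ ->]]]].
        exists x, B, d; auto.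
Qed.

Lemma pw_compact_tube (C1 C2 O : bgroup -> Prop) : pw_compact C1 -> pw_compact C2 -> pw_open O ->
  (forall x y, C1 x -> C2 y -> O (bmul x y)) ->
  exists B, forall x y g, C1 x -> C2 y -> agree B (bmul x y) g -> O g.
Proof.
  intros H1 H2 HO HC.
  assert (Hrow : forall x, C1 x -> exists Bx, forall x' y g, agree Bx x x' -> C2 y ->
            agree Bx (bmul x' y) g -> O g).
  { intros x Hx.
    destruct (pw_compact_basic_subcover (D := unit) C2
      (fun y B _ => forall g, agree B (bmul x y) g -> O g) H2) as [l [Hl Hcov]].
    - intros y Hy. destruct (HO _ (HC x y Hx Hy)) as [B HB]. exists B, tt. auto.
    - exists (cover_coords l). intros x' y' g Hxx Hy' Hg.
      destruct (Hcov y' Hy') as [y [B [d [Hin Hyy]]]].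
      apply (proj2 (Hl _ _ _ Hin)). intros A HA.
      rewrite (agree_cover_coords l y B d _ _ Hin Hg A HA), !coord_bmul.
      rewrite (agree_cover_coords l y B d _ _ Hin Hxx A HA), Hyy; auto. }
  destruct (pw_compact_basic_subcover (D := unit) C1 (fun x B _ => forall x' y g,
      agree B x x' -> C2 y -> agree B (bmul x' y) g -> O g) H1) as [l [Hl Hcov]].
  - intros x Hx. destruct (Hrow x Hx) as [B HB]; exists B, tt; auto.
  - exists (cover_coords l). intros x' y g Hx' Hy Hg.
    destruct (Hcov x' Hx') as [x [B [d [Hin Hxx]]]].
    eapply (proj2 (Hl _ _ _ Hin)); eauto. eapply agree_cover_coords; eauto.
Qed.

Lemma pw_compact_bmul C1 C2 : pw_compact C1 -> pw_compact C2 ->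
  pw_compact (fun g => exists x y, C1 x /\ C2 y /\ g = bmul x y).
Proof.
  intros H1 H2 F HF Hcov.
  assert (Hrow : forall x, C1 x -> exists Bx lW, (forall W, In W lW -> F W) /\
     forall x' y, agree Bx x x' -> C2 y -> exists W, In W lW /\ W (bmul x' y)).
  { intros x Hx.
    destruct (pw_compact_basic_subcover (D := bgroup -> Prop) C2
      (fun y B W => F W /\ forall g, agree B (bmul x y) g -> W g) H2) as [l [Hl Hc]].
    - intros y Hy. destruct (Hcov (bmul x y)) as [W [FW Wxy]]; [exists x, y; auto|].
      destruct (HF W FW _ Wxy) as [B HB]. exists B, W. auto.
    - exists (cover_coords l), (map (fun t : bgroup * list natset * (bgroup -> Prop) =>
        let '(_, _, W) := t in W) l). split.
      + intros W HW. apply in_map_iff in HW as [[[y B] W'] [<- Hin]]. apply (Hl _ _ _ Hin).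
      + intros x' y' Hxx Hy'. destruct (Hc y' Hy') as [y [B [W [Hin Hyy]]]].
        exists W. split; [apply in_map_iff; exists (y, B, W); auto|].
        apply (proj2 (Hl _ _ _ Hin)). intros A HA. rewrite !coord_bmul.
        rewrite (agree_cover_coords l y B W _ _ Hin Hxx A HA), Hyy; auto. }
  destruct (pw_compact_basic_subcover (D := list (bgroup -> Prop)) C1
    (fun x B lW => (forall W, In W lW -> F W) /\
       forall x' y, agree B x x' -> C2 y -> exists W, In W lW /\ W (bmul x' y)) H1)
    as [l [Hl Hc]].
  - intros x Hx. destruct (Hrow x Hx) as [B [lW H]]. exists B, lW; auto.
  - exists (concat (map (fun t : bgroup * list natset * list (bgroup -> Prop) =>
      let '(_, _, lW) := t in lW) l)). split.
    + intros W HW. apply in_concat in HW as [lW [HlW HW]].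
      apply in_map_iff in HlW as [[[x B] lW'] [<- Hin]]. apply (Hl _ _ _ Hin); auto.
    + intros g [x' [y [Hx' [Hy ->]]]]. destruct (Hc x' Hx') as [x [B [lW [Hin Hxx]]]].
      destruct (proj2 (proj2 (Hl _ _ _ Hin)) x' y Hxx Hy) as [W [HW1 HW2]].
      exists W. split; auto. apply in_concat. exists lW. split; auto.
      apply in_map_iff. exists (x, B, lW); auto.
Qed.

Lemma pw_compact_ext (C C' : bgroup -> Prop) : (forall g, C g <-> C' g) ->
  pw_compact C -> pw_compact C'.
Proof.
  intros E H F HF Hc. destruct (H F HF) as [l [H1 H2]]; [intros x Hx; apply Hc, E; auto|].
  exists l; split; auto. intros x Hx; apply H2, E; auto.
Qed.

Lemma pw_compact_inter_closed (C Cl : bgroup -> Prop) : pw_compact C ->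
  pw_open (fun g => ~ Cl g) -> pw_compact (fun g => C g /\ Cl g).
Proof.
  intros HC HCl F HF Hcov.
  destruct (HC (fun W => F W \/ W = (fun g => ~ Cl g))) as [l [H1 H2]].
  - intros W [HW| ->]; auto.
  - intros x Hx. destruct (classic (Cl x)) as [Hc|Hc].
    + destruct (Hcov x (conj Hx Hc)) as [W [? ?]]; exists W; auto.
    + exists (fun g => ~ Cl g); auto.
  - exists (filter (fun W => truth (F W)) l). split.
    + intros W HW. apply filter_In in HW. apply truth_true; tauto.
    + intros x [Hx Hc]. destruct (H2 x Hx) as [W [HW Wx]]. exists W. split; auto.
      apply filter_In. split; auto. apply truth_true.
      destruct (H1 W HW) as [|E]; [auto|subst; contradiction].
Qed.

(* A_1(βℕ) is 0 together with a copy of βℕ, so this is the compactness of βℕ. *)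
Lemma words_le_1_compact : pw_compact (words_le 1).
Proof.
  intros F HF Hcov.
  set (good := fun E : natset => exists W, F W /\
                 forall q g, is_ultrafilter q -> q E -> coord g = word_eval [q] -> W g).
  assert (Hgood : forall p, is_ultrafilter p -> exists E, good E /\ p E).
  { intros p Hp.
    destruct (Hcov (word_elt [p] (Forall_cons _ Hp (Forall_nil _)))) as [W [FW Wp]];
      [exists [p]; simpl; auto|].
    destruct (HF W FW _ Wp) as [B HB].
    exists (fun n => forall A, In A B -> (A n <-> p A)). split; [|apply ultra_atom; auto].
    exists W. split; auto. intros q g Hq HqE Hg. apply HB. intros A HA.
    rewrite Hg. cbn [coord proj1_sig word_elt]. rewrite !word_eval_single.
    apply truth_iff, (ultra_atom_iff p q B A Hq HqE HA). }
  destruct (ultra_compact good Hgood) as [Es [HEs HEs_cover]].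
  destruct (list_choice (fun E W => F W /\
      forall q g, is_ultrafilter q -> q E -> coord g = word_eval [q] -> W g) Es)
    as [Ws [HWs1 HWs2]]; [intros E HE; apply HEs; auto|].
  destruct (Hcov bzero (words_le_zero 1)) as [W0 [FW0 W0z]].
  exists (W0 :: Ws). split.
  - intros W [<-|HW]; auto. destruct (HWs1 W HW) as [E [_ [? _]]]; auto.
  - intros g Hg. destruct (words_le_1 g Hg) as [->|[p [Hp Hgp]]].
    + exists W0; split; auto. left; auto.
    + destruct (ultra_finite_cover p Hp Es HEs_cover) as [E [HE pE]].
      destruct (HWs2 E HE) as [W [HW [_ HWE]]].
      exists W. split; [right; auto|]. eapply HWE; eauto.
Qed.

Lemma words_le_compact n : pw_compact (words_le n).
Proof.
  induction n as [|n IH].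
  - intros F HF Hcov. destruct (Hcov bzero (words_le_zero 0)) as [W [FW Wz]].
    exists [W]. split; [intros W' [<-|[]]; auto|].
    intros g Hg. rewrite (words_le_0 g Hg). exists W. split; auto. left; auto.
  - eapply pw_compact_ext; [intros g; symmetry; apply words_le_S|].
    apply pw_compact_bmul; auto. apply words_le_1_compact.
Qed.

Definition kw_open (W : bgroup -> Prop) : Prop :=
  forall n, exists V, pw_open V /\ forall g, words_le n g -> (W g <-> V g).

Lemma kw_open_of_pw V : pw_open V -> kw_open V.
Proof. intros H n. exists V; split; auto. tauto. Qed.

Lemma kw_open_translate W c : kw_open W -> kw_open (fun g => W (bmul g c)).
Proof.
  intros H n. destruct (words_le_some c) as [m Hm]. destruct (H (n + m)) as [V [HV E]].
  exists (fun g => V (bmul g c)). split; [apply pw_open_translate; auto|].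
  intros g Hg. apply E, words_le_bmul; auto.
Qed.

Lemma kw_topology : is_topology kw_open.
Proof.
  split; [|split].
  - apply kw_open_of_pw. intros g _. exists []. auto.
  - intros F HF n.
    exists (fun x => exists U, F U /\
      exists V, pw_open V /\ (forall g, words_le n g -> (U g <-> V g)) /\ V x).
    split.
    + intros g [U [FU [V [HV [E Vg]]]]]. destruct (HV g Vg) as [B HB]. exists B.
      intros g' Hg'. exists U. split; auto. exists V; auto.
    + intros g Hg. split.
      * intros [U [FU Ug]]. destruct (HF U FU n) as [V [HV E]].
        exists U. split; auto. exists V. split; [exact HV|split; [exact E|apply E; auto]].
      * intros [U [FU [V [HV [E Vg]]]]]. exists U. split; auto. apply E; auto.
  - intros U1 U2 H1 H2 n. destruct (H1 n) as [V1 [HV1 E1]], (H2 n) as [V2 [HV2 E2]].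
    exists (fun g => V1 g /\ V2 g). split.
    + intros g [g1 g2]. destruct (HV1 g g1) as [B1 HB1], (HV2 g g2) as [B2 HB2].
      exists (B1 ++ B2). intros g' Hg'. split.
      * apply HB1. eapply agree_sub; [|exact Hg']. intros; apply in_or_app; auto.
      * apply HB2. eapply agree_sub; [|exact Hg']. intros; apply in_or_app; auto.
    + intros g Hg. rewrite (E1 g Hg), (E2 g Hg). tauto.
Qed.

Lemma kw_hausdorff : hausdorff kw_open.
Proof.
  intros x y Hxy. destruct (bgroup_neq_coord x y Hxy) as [A HA].
  exists (fun g => coord g A = coord x A), (fun g => coord g A = coord y A).
  split; [apply kw_open_of_pw, pw_open_coord|].
  split; [apply kw_open_of_pw, pw_open_coord|].
  split; [auto|split; [auto|]]. intros z H1 H2. apply HA. congruence.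
Qed.

(* For a neighbourhood W of 0, a neighbourhood P of 0 with P + P ⊆ W is built as the union
   of layers P_n ⊆ A_n(βℕ): P_n is compact with P_n + P_n ⊆ W, so by the tube lemma a basic
   neighbourhood of P_n keeps sums inside W, and P_(n+1) is its trace on A_(n+1)(βℕ). *)
Section HalfNeighbourhood.
Variable W : bgroup -> Prop.
Hypothesis W_open : kw_open W.
Hypothesis W_zero : W bzero.

Definition layer_margin (n : nat) (P : bgroup -> Prop) : list natset :=
  epsilon (inhabits []) (fun B => forall x y g, P x -> P y -> agree B (bmul x y) g ->
                                    words_le (n + n + 2) g -> W g).

Fixpoint layer (n : nat) : bgroup -> Prop :=
  match n with
  | 0 => fun g => g = bzero
  | S m => fun g => words_le (S m) g /\
                    exists p, layer m p /\ agree (layer_margin m (layer m)) p g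
  end.

Lemma layer_margin_spec n P : pw_compact P -> (forall g, P g -> words_le n g) ->
  (forall x y, P x -> P y -> W (bmul x y)) ->
  forall x y g, P x -> P y -> agree (layer_margin n P) (bmul x y) g ->
    words_le (n + n + 2) g -> W g.
Proof.
  intros Hc HK HW. unfold layer_margin. apply epsilon_spec.
  destruct (W_open (n + n + 2)) as [V [HV EV]].
  destruct (pw_compact_tube P P V Hc Hc HV) as [B HB].
  - intros x y Hx Hy.
    assert (Hk : words_le (n + n + 2) (bmul x y)).
    { apply words_le_mono with (n + n); [lia|]. apply words_le_bmul; auto. }
    apply (proj1 (EV _ Hk)), HW; auto.
  - exists B. intros x y g Hx Hy Hg HK'. apply (proj2 (EV _ HK')), (HB x y g Hx Hy Hg).
Qed.

Lemma layer_spec n : pw_compact (layer n) /\ (forall g, layer n g -> words_le n g) /\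
  (forall x y, layer n x -> layer n y -> W (bmul x y)).
Proof.
  induction n as [|n [IHc [IHK IHW]]].
  - split; [|split].
    + intros F HF Hcov. destruct (Hcov bzero eq_refl) as [U [FU Uz]]. exists [U].
      split; [intros U' [<-|[]]; auto|]. intros g ->. exists U; split; auto; left; auto.
    + intros g ->. apply words_le_zero.
    + intros x y -> ->. rewrite bmul_0l; auto.
  - split; [|split].
    + eapply pw_compact_ext; [|apply (pw_compact_inter_closed (words_le (S n))
          (fun g => exists p, layer n p /\ agree (layer_margin n (layer n)) p g))].
      * intros g. simpl. tauto.
      * apply words_le_compact.
      * intros g Hg. exists (layer_margin n (layer n)). intros g' Hg' [p [Hp Hpg]]. apply Hg.
        exists p. split; auto. eapply agree_trans; eauto. apply agree_sym; auto.
    + intros g [Hg _]; auto.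
    + intros x y [Kx [p [Hp Hpx]]] [Ky [q [Hq Hqy]]].
      apply (layer_margin_spec n (layer n) IHc IHK IHW p q); auto.
      * apply agree_bmul; auto.
      * replace (n + n + 2) with (S n + S n) by lia. apply words_le_bmul; auto.
Qed.

Lemma layer_mono n m g : n <= m -> layer n g -> layer m g.
Proof.
  induction 1; auto. intros H'. simpl. split.
  - apply words_le_mono with m; [lia|]. apply (proj1 (proj2 (layer_spec m))); auto.
  - exists g. split; auto. apply agree_refl.
Qed.

Definition layers (g : bgroup) : Prop := exists n, layer n g.

Lemma layers_open : kw_open layers.
Proof.
  intros m.
  exists (fun g => exists n, m <= n /\ exists p, layer n p /\ agree (layer_margin n (layer n)) p g).
  split.
  - intros g [n [Hmn [p [Hp Hpg]]]]. exists (layer_margin n (layer n)). intros g' Hg'.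
    exists n. split; auto. exists p. split; auto. eapply agree_trans; eauto.
  - intros g Hg. split.
    + intros [j Hj]. exists (Nat.max j m). split; [lia|]. exists g. split; [|apply agree_refl].
      apply layer_mono with j; auto; lia.
    + intros [n [Hmn [p [Hp Hpg]]]]. exists (S n). simpl. split; [|exists p; auto].
      apply words_le_mono with m; auto; lia.
Qed.

Lemma layers_add x y : layers x -> layers y -> W (bmul x y).
Proof.
  intros [i Hi] [j Hj]. apply (proj2 (proj2 (layer_spec (Nat.max i j)))).
  - apply layer_mono with i; auto; lia.
  - apply layer_mono with j; auto; lia.
Qed.
End HalfNeighbourhood.

Lemma kw_open_half W : kw_open W -> W bzero ->
  exists P, kw_open P /\ P bzero /\ forall x y, P x -> P y -> W (bmul x y).
Proof.
  intros HW W0. exists (layers W). split; [apply layers_open; auto|].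
  split; [exists 0; reflexivity|]. apply layers_add; auto.
Qed.

Lemma kw_bmul_continuous : continuous2 kw_open kw_open bmul.
Proof.
  intros a b W HW Hab.
  destruct (kw_open_half (fun g => W (bmul g (bmul a b)))) as [P [HP [P0 HPW]]];
    [apply kw_open_translate; auto|rewrite bmul_0l; auto|].
  exists (fun x => P (bmul x a)), (fun y => P (bmul y b)).
  split; [apply kw_open_translate; auto|].
  split; [apply kw_open_translate; auto|].
  split; [rewrite bmul_self; auto|]. split; [rewrite bmul_self; auto|].
  intros x y Hx Hy. specialize (HPW _ _ Hx Hy).
  replace (bmul x y) with (bmul (bmul (bmul x a) (bmul y b)) (bmul a b)); auto.
  apply bgroup_ext. intros A. rewrite !coord_bmul.
  destruct (coord x A), (coord y A), (coord a A), (coord b A); reflexivity.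
Qed.

(* Every element is its own inverse. *)
Lemma kw_topological_group : topological_group kw_open bmul (fun g => g) bzero.
Proof.
  split; [apply kw_topology|]. split; [apply kw_hausdorff|].
  split; [apply bmul_assoc|]. split; [apply bmul_0l|]. split; [apply bmul_0r|].
  split; [intros; apply bmul_self|]. split; [intros; apply bmul_self|].
  split; [apply kw_bmul_continuous|]. intros W HW; exact HW.
Qed.

Lemma kw_compact_words_le n : compact_set kw_open (words_le n).
Proof.
  intros F HF Hcov.
  destruct (words_le_compact n
    (fun V => exists U, F U /\ pw_open V /\ forall g, words_le n g -> (U g <-> V g)))
    as [l0 [H1 H2]].
  - intros V [_ [_ [HV _]]]; auto.
  - intros x Hx. destruct (Hcov x Hx) as [U [FU Ux]]. destruct (HF U FU n) as [V [HV E]].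
    exists V. split; [exists U; auto|apply E; auto].
  - destruct (list_choice (fun V U => F U /\ forall g, words_le n g -> (U g <-> V g)) l0)
      as [l [L1 L2]].
    + intros V HV. destruct (H1 V HV) as [U [FU [_ E]]]. exists U; auto.
    + exists l. split.
      * intros U HU. destruct (L1 U HU) as [V [_ [? _]]]; auto.
      * intros x Hx. destruct (H2 x Hx) as [V [HV Vx]]. destruct (L2 V HV) as [U [HU [_ E]]].
        exists U. split; auto. apply E; auto.
Qed.

Lemma kw_k_space : k_space kw_open.
Proof.
  intros A HA n. destruct (HA (words_le n) (kw_compact_words_le n)) as [C [HC E]].
  destruct (HC n) as [V [HV EV]]. exists V. split; auto.
  intros g Hg. rewrite <- EV; auto. rewrite (E g Hg). tauto.
Qed.

Definition infinite (P : nat -> Prop) : Prop := forall N, exists k, N <= k /\ P k.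

Lemma not_infinite (P : nat -> Prop) : ~ infinite P -> exists N, forall k, N <= k -> ~ P k.
Proof.
  intros H. apply NNPP; intro Hn. apply H. intros N. apply NNPP; intro Hn'.
  apply Hn. exists N. intros k Hk Pk. apply Hn'. eauto.
Qed.

Lemma increasing_ge_id (f : nat -> nat) : (forall i j, i < j -> f i < f j) -> forall i, i <= f i.
Proof. intros H. induction i; [lia|]. specialize (H i (S i) ltac:(lia)). lia. Qed.

(* Dependent choice along a decreasing chain of infinite subsets of [P]: each stage picks an
   index and a datum [t] by [Hstep] and keeps only the later indices satisfying [Psi _ t]. *)
Section DiagonalSelection.
Context {T : Type} (P : nat -> Prop) (Phi Psi : nat -> T -> Prop).
Hypothesis HP : infinite P.
Hypothesis Hstep : forall Z : nat -> Prop, infinite Z -> (forall k, Z k -> P k) ->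
  exists k t, Z k /\ Phi k t /\ infinite (fun k' => Z k' /\ Psi k' t).

Definition stage : Type := {Z : nat -> Prop | infinite Z /\ forall k, Z k -> P k}.

Definition stage_choice (z : stage) : {kt : nat * T | proj1_sig z (fst kt) /\
  Phi (fst kt) (snd kt) /\ infinite (fun k' => proj1_sig z k' /\ Psi k' (snd kt))}.
Proof.
  destruct z as [Z [HZ HZP]]. apply constructive_indefinite_description.
  destruct (Hstep Z HZ HZP) as [k [t H]]. exists (k, t). exact H.
Defined.

Definition stage_next (z : stage) : stage.
Proof.
  set (kt := proj1_sig (stage_choice z)).
  refine (exist _ (fun k' => proj1_sig z k' /\ Psi k' (snd kt) /\ fst kt < k') _).
  destruct (proj2_sig (stage_choice z)) as [_ [_ Hinf]]. split.
  - intros N. destruct (Hinf (Nat.max N (S (fst kt)))) as [k [Hk [H1 H2]]].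
    exists k. repeat split; auto; lia.
  - intros k [Hk _]. apply (proj2 (proj2_sig z)). auto.
Defined.

Fixpoint stages (i : nat) : stage :=
  match i with
  | 0 => exist _ P (conj HP (fun k h => h))
  | S i => stage_next (stages i)
  end.

Definition selected_index (i : nat) : nat := fst (proj1_sig (stage_choice (stages i))).
Definition selected_datum (i : nat) : T := snd (proj1_sig (stage_choice (stages i))).

Lemma stages_decreasing i j : i <= j -> forall k, proj1_sig (stages j) k -> proj1_sig (stages i) k.
Proof. induction 1; auto. intros k Hk. apply IHle. apply Hk. Qed.

Lemma selection_spec :
  (forall i, P (selected_index i) /\ Phi (selected_index i) (selected_datum i)) /\
  (forall i j, i < j -> selected_index i < selected_index j /\
                        Psi (selected_index j) (selected_datum i)).
Proof.
  split.
  - intros i. unfold selected_index, selected_datum.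
    destruct (proj2_sig (stage_choice (stages i))) as [H1 [H2 _]]. split; auto.
    apply (proj2 (proj2_sig (stages i))). auto.
  - intros i j Hij. assert (H : proj1_sig (stages (S i)) (selected_index j)).
    { apply stages_decreasing with j; [lia|]. apply (proj2_sig (stage_choice (stages j))). }
    destruct H as [_ [H1 H2]]. split; auto.
Qed.
End DiagonalSelection.

Lemma diagonal_selection {T : Type} (P : nat -> Prop) (Phi Psi : nat -> T -> Prop) :
  infinite P ->
  (forall Z : nat -> Prop, infinite Z -> (forall k, Z k -> P k) ->
     exists k t, Z k /\ Phi k t /\ infinite (fun k' => Z k' /\ Psi k' t)) ->
  exists (ks : nat -> nat) (ts : nat -> T),
    (forall i, i <= ks i) /\ (forall i, P (ks i) /\ Phi (ks i) (ts i)) /\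
    (forall i j, i < j -> Psi (ks j) (ts i)).
Proof.
  intros HP Hs. destruct (selection_spec P Phi Psi HP Hs) as [H1 H2].
  exists (selected_index P Phi Psi HP Hs), (selected_datum P Phi Psi HP Hs).
  split; [apply increasing_ge_id; apply H2|split; [exact H1|apply H2]].
Qed.

Definition fresh_part (D : nat -> natset) (i : nat) : natset :=
  fun n => D i n /\ forall j, j < i -> ~ D j n.

Lemma fresh_part_disjoint D i j n : fresh_part D i n -> fresh_part D j n -> i = j.
Proof.
  intros [Di Hi] [Dj Hj]. destruct (lt_eq_lt_dec i j) as [[Hlt|Heq]|Hgt]; auto.
  - destruct (Hj i Hlt Di).
  - destruct (Hi j Hgt Dj).
Qed.

Lemma ultra_fresh_part u D i : is_ultrafilter u -> u (D i) ->
  (forall j, j < i -> ~ u (D j)) -> u (fresh_part D i).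
Proof.
  intros Hu HD Hj. apply (ultra_meet u Hu); auto.
  apply (ultra_meet_below u Hu (fun j n => ~ D j n)).
  intros j Hij. apply ultra_not_iff_compl; auto.
Qed.

(* βℕ has no nontrivial convergent sequences. *)
Lemma ultra_seq_no_limit (P : nat -> Prop) (o : nat -> natset -> Prop) r :
  infinite P -> is_ultrafilter r -> (forall k, P k -> is_ultrafilter (o k) /\ o k <> r) ->
  ~ (forall C, exists N, forall k, N <= k -> P k -> (o k C <-> r C)).
Proof.
  intros HP Hr Ho Hlim.
  destruct (diagonal_selection P (fun k D => o k D /\ ~ r D) (fun k D => ~ o k D) HP)
    as [ks [D [Hks [Hsel Hlater]]]].
  { intros Z HZ HZP. destruct (HZ 0) as [k [_ Zk]]. destruct (Ho k (HZP k Zk)) as [Hok Hne].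
    destruct (ultra_separate (o k) r Hok Hr Hne) as [D [D1 D2]]. exists k, D.
    split; [auto|split; [auto|]].
    destruct (Hlim D) as [N HN]. intros N'. destruct (HZ (Nat.max N N')) as [k' [Hk' Zk']].
    exists k'. split; [lia|split; auto]. intro Hc. apply D2, (HN k'); auto; lia. }
  assert (Hfresh : forall i, o (ks i) (fresh_part D i)).
  { intros i. destruct (Hsel i) as [HPi [Hoi _]].
    apply ultra_fresh_part; [apply Ho; auto|auto|]. intros j Hj; apply Hlater; auto. }
  set (parity_part := fun (b : bool) n => exists i, Nat.even i = b /\ fresh_part D i n).
  assert (exists b, ~ r (parity_part b)) as [b Hb].
  { apply NNPP; intro Hn. apply (ultra_not_empty r Hr).
    apply (ultra_meet_mono r Hr (parity_part true) (parity_part false)).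
    - intros n [i [Hi Fi]] [i' [Hi' Fi']]. rewrite (fresh_part_disjoint D i i' n Fi Fi') in Hi.
      congruence.
    - apply NNPP; intro; apply Hn; eauto.
    - apply NNPP; intro; apply Hn; eauto. }
  destruct (Hlim (parity_part b)) as [N HN].
  set (i := 2 * N + (if b then 0 else 1)).
  assert (Hi : Nat.even i = b).
  { unfold i. rewrite Nat.even_add, Nat.even_mul. destruct b; reflexivity. }
  destruct (Hsel i) as [HPi _].
  apply Hb, (HN (ks i)); [specialize (Hks i); unfold i in *; lia|auto|].
  eapply (ultra_mono (o (ks i)) (proj1 (Ho _ HPi))); [|apply Hfresh].
  intros n Hn. exists i; auto.
Qed.

Section PairSequence.
Variables (P : nat -> Prop) (p q : nat -> natset -> Prop).
Hypothesis HP : infinite P.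
Hypothesis Hpq : forall k, P k -> is_ultrafilter (p k) /\ is_ultrafilter (q k) /\ p k <> q k.
Hypothesis Hclose : forall C, exists N, forall k, N <= k -> P k -> (p k C <-> q k C).

Lemma pair_close_eventually (Z : nat -> Prop) W : (forall k, Z k -> P k) ->
  ~ infinite (fun k => Z k /\ ~ p k W /\ ~ q k W) -> exists N, forall k, N <= k -> Z k -> p k W.
Proof.
  intros HZP HW. destruct (Hclose W) as [N1 HN1]. destruct (not_infinite _ HW) as [N2 HN2].
  exists (Nat.max N1 N2). intros k Hk Zk.
  specialize (HN1 k ltac:(lia) (HZP _ Zk)). specialize (HN2 k ltac:(lia)). tauto.
Qed.

Lemma pair_selection_step
  (Hspread : forall r, exists N, forall k, N <= k -> P k -> p k <> r /\ q k <> r)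
  (Z : nat -> Prop) : infinite Z -> (forall k, Z k -> P k) ->
  exists k WE, Z k /\
    (p k (fst WE) /\ q k (fst WE) /\ p k (snd WE) /\ ~ q k (snd WE)) /\
    infinite (fun k' => Z k' /\ ~ p k' (fst WE) /\ ~ q k' (fst WE)).
Proof.
  intros HZ HZP.
  destruct (HZ 0) as [k1 [_ Z1]].
  destruct (Hspread (p k1)) as [N1 HN1]. destruct (Hspread (q k1)) as [N2 HN2].
  destruct (HZ (Nat.max N1 N2)) as [k2 [Hk2 Z2]].
  destruct (Hpq k1 (HZP _ Z1)) as [Hp1 [Hq1 Hne1]].
  destruct (Hpq k2 (HZP _ Z2)) as [Hp2 [Hq2 Hne2]].
  destruct (HN1 k2 ltac:(lia) (HZP _ Z2)) as [D1 D2].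
  destruct (HN2 k2 ltac:(lia) (HZP _ Z2)) as [D3 D4].
  destruct (ultra_separate4 (p k1) (q k1) (p k2) (q k2)) as [W [W1 [W2 [W3 W4]]]]; auto.
  destruct (ultra_separate (p k1) (q k1) Hp1 Hq1 Hne1) as [E1 [E1p E1q]].
  destruct (ultra_separate (p k2) (q k2) Hp2 Hq2 Hne2) as [E2 [E2p E2q]].
  destruct (classic (infinite (fun k' => Z k' /\ ~ p k' W /\ ~ q k' W))) as [I1|I1].
  { exists k1, (W, E1). simpl. repeat split; auto. }
  set (W' := fun n => ~ W n).
  destruct (classic (infinite (fun k' => Z k' /\ ~ p k' W' /\ ~ q k' W'))) as [I2|I2].
  { exists k2, (W', E2). simpl. repeat split; auto; apply ultra_not_iff_compl; auto. }
  exfalso.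
  destruct (pair_close_eventually Z W HZP I1) as [N7 HN7].
  destruct (pair_close_eventually Z W' HZP I2) as [N8 HN8].
  destruct (HZ (Nat.max N7 N8)) as [k [Hk Zk]].
  apply (ultra_compl (p k) (proj1 (Hpq k (HZP _ Zk))) W); [apply HN7|apply HN8]; auto; lia.
Qed.

Lemma pair_seq_spread_not_close :
  ~ (forall r, exists N, forall k, N <= k -> P k -> p k <> r /\ q k <> r).
Proof.
  intros Hspread.
  destruct (diagonal_selection P
    (fun k WE => p k (fst WE) /\ q k (fst WE) /\ p k (snd WE) /\ ~ q k (snd WE))
    (fun k' WE => ~ p k' (fst WE) /\ ~ q k' (fst WE)) HP (pair_selection_step Hspread))
    as [ks [WE [Hks [Hsel Hlater]]]].
  set (W := fun i => fst (WE i)). set (E := fun i => snd (WE i)).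
  set (A := fun n => exists i, E i n /\ fresh_part W i n).
  assert (HA : forall i u, is_ultrafilter u -> u (fresh_part W i) -> (u A <-> u (E i))).
  { intros i u Hu HuR. split; intro Hx.
    - apply (ultra_meet_mono u Hu A (fresh_part W i)); [|exact Hx|exact HuR].
      intros n [i' [Ei' Ri']] Ri. rewrite (fresh_part_disjoint W i' i n Ri' Ri) in Ei'. exact Ei'.
    - apply (ultra_meet_mono u Hu (E i) (fresh_part W i)); [|exact Hx|exact HuR].
      intros n Ei Ri. exists i; auto. }
  destruct (Hclose A) as [N HN].
  destruct (Hsel N) as [PN [HpW [HqW [HpE HqE]]]].
  destruct (Hpq _ PN) as [Hup [Huq _]].
  assert (HpR : p (ks N) (fresh_part W N))
    by (apply ultra_fresh_part; auto; intros j Hj; apply (Hlater j N Hj)).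
  assert (HqR : q (ks N) (fresh_part W N))
    by (apply ultra_fresh_part; auto; intros j Hj; apply (Hlater j N Hj)).
  apply HqE, (HA N _ Huq HqR), (HN (ks N) (Hks N) PN), (HA N _ Hup HpR), HpE.
Qed.
End PairSequence.

(* The sums p_k + q_k of distinct ultrafilters do not converge to 0. *)
Lemma ultra_pair_seq_not_close (P : nat -> Prop) (p q : nat -> natset -> Prop) :
  infinite P -> (forall k, P k -> is_ultrafilter (p k) /\ is_ultrafilter (q k) /\ p k <> q k) ->
  ~ (forall C, exists N, forall k, N <= k -> P k -> (p k C <-> q k C)).
Proof.
  intros HP Hpq Hclose.
  destruct (classic (exists r, infinite (fun k => P k /\ (p k = r \/ q k = r)))) as [[r Hr]|Hnr].
  - assert (Hufr : is_ultrafilter r).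
    { destruct (Hr 0) as [k [_ [Pk [<-|<-]]]]; apply (Hpq k Pk). }
    set (o := fun k => if excluded_middle_informative (p k = r) then q k else p k).
    apply (ultra_seq_no_limit _ o r Hr Hufr).
    + intros k [Pk Hk]. destruct (Hpq k Pk) as [H1 [H2 H3]]. unfold o.
      destruct excluded_middle_informative as [<-|E]; split; auto; congruence.
    + intros C. destruct (Hclose C) as [N HN]. exists N. intros k Hk [Pk Hpk].
      specialize (HN k Hk Pk). unfold o. destruct excluded_middle_informative as [<-|E].
      * tauto.
      * destruct Hpk as [E'|<-]; [contradiction|exact HN].
  - apply (pair_seq_spread_not_close P p q HP Hpq Hclose). intros r.
    destruct (not_infinite (fun k => P k /\ (p k = r \/ q k = r))) as [N HN]; [eauto|].
    exists N. intros k Hk Pk. split; intro E; apply (HN k Hk); auto.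
Qed.

Lemma agreeing_letters_not_close (P : nat -> Prop) (F : nat -> word) : infinite P ->
  (forall k, P k -> NoDup (F k) /\ Forall is_ultrafilter (F k) /\ 2 <= length (F k)) ->
  ~ (forall C, exists N, forall k, N <= k -> P k ->
       forall p p', In p (F k) -> In p' (F k) -> p C -> p' C).
Proof.
  intros HP HF Hagree.
  set (d := fun _ : natset => True).
  apply (ultra_pair_seq_not_close P (fun k => nth 0 (F k) d) (fun k => nth 1 (F k) d) HP).
  - intros k Pk. destruct (HF k Pk) as [HN [HU HL]]. rewrite Forall_forall in HU.
    split; [apply HU, nth_In; lia|split; [apply HU, nth_In; lia|]].
    intros E. apply (proj1 (NoDup_nth (F k) d) HN 0 1) in E; lia.
  - intros C. destruct (Hagree C) as [N HN]. exists N. intros k Hk Pk.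
    destruct (HF k Pk) as [_ [_ HL]].
    split; apply (HN k Hk Pk); apply nth_In; lia.
Qed.

(* A sequence of nonzero elements of A_M(βℕ) does not converge pointwise to 0: either some
   set C cuts infinitely many of the words properly, and restricting to C shortens them, or
   eventually every set is contained in all or in none of the letters of each word. *)
Lemma reduced_words_not_null M : forall (P : nat -> Prop) (F : nat -> word), infinite P ->
  (forall k, P k -> NoDup (F k) /\ Forall is_ultrafilter (F k) /\ F k <> [] /\
                    length (F k) <= M) ->
  exists A, infinite (fun k => P k /\ word_eval (F k) A = true).
Proof.
  induction M as [|M IH]; intros P F HP HF.
  { exfalso. destruct (HP 0) as [k [_ Pk]]. destruct (HF k Pk) as [_ [_ [Hne HL]]].
    destruct (F k); simpl in HL; [congruence|lia]. }
  destruct (classic (exists C, infinite (fun k => P k /\ word_restrict C (F k) <> [] /\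
                                        exists p, In p (F k) /\ ~ p C))) as [[C HC]|HnC].
  - destruct (IH _ (fun k => word_restrict C (F k)) HC) as [B HB].
    + intros k [Pk [Hne Hex]]. destruct (HF k Pk) as [H1 [H2 [H3 H4]]].
      pose proof (word_restrict_shorter C (F k) Hex).
      split; [apply NoDup_filter; auto|split; [|split; [auto|lia]]].
      apply Forall_forall. intros x Hx. apply filter_In in Hx.
      rewrite Forall_forall in H2. apply H2; tauto.
    + exists (fun n => B n /\ C n). intros N. destruct (HB N) as [k [Hk [[Pk _] Hs]]].
      exists k. split; auto. split; auto. rewrite <- word_eval_restrict; auto. apply (HF k Pk).
  - destruct (classic (infinite (fun k => P k /\ word_eval (F k) (fun _ => True) = true)))
      as [HT|HT]; [exists (fun _ => True); auto|].
    exfalso. destruct (not_infinite _ HT) as [N0 HN0].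
    apply (agreeing_letters_not_close (fun k => P k /\ N0 <= k) F).
    + intros N. destruct (HP (Nat.max N N0)) as [k [Hk Pk]].
      exists k. split; [lia|split; auto; lia].
    + intros k [Pk Hk]. destruct (HF k Pk) as [H1 [H2 [H3 _]]]. split; [auto|split; auto].
      assert (Hodd := HN0 k Hk). rewrite word_eval_full in Hodd by auto.
      destruct (F k) as [|a [|b w]]; simpl in *; [congruence|tauto|lia].
    + intros C. destruct (not_infinite (fun k => P k /\ word_restrict C (F k) <> [] /\
        exists p, In p (F k) /\ ~ p C)) as [N HN]; [eauto|].
      exists N. intros k Hk [Pk _] p p' Hp Hp' pC. apply NNPP; intro p'C.
      apply (HN k Hk). split; [auto|split; [|eauto]].
      intro E. assert (Hin : In p (word_restrict C (F k)))
        by (apply filter_In; split; [auto|apply truth_true; auto]).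
      rewrite E in Hin. destruct Hin.
Qed.

Lemma kw_closed_finite_traces (Z : bgroup -> Prop) :
  (forall j, exists l, forall g, words_le j g -> Z g -> In g l) -> kw_open (fun g => ~ Z g).
Proof.
  intros H j. destruct (H j) as [l Hl].
  exists (fun g => forall h, In h (filter (fun h => truth (Z h)) l) -> g <> h).
  split; [apply pw_open_avoid_list|].
  intros g Hg. split.
  - intros HnZ h Hh ->. apply filter_In in Hh as [_ Zh].
    apply (proj1 (truth_true _)) in Zh. contradiction.
  - intros Hav Zg. apply (Hav g); auto. apply filter_In.
    split; [apply Hl; auto|apply truth_true; auto].
Qed.

Lemma convergent_eventually_bounded s x : converges kw_open s x ->
  exists m N, forall n, N <= n -> words_le m (s n).
Proof.
  intros Hc. apply NNPP; intro Hn.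
  assert (Hesc : forall m, exists n, m <= n /\ ~ words_le m (s n)).
  { intros m. apply NNPP; intro H'. apply Hn. exists m, m. intros n Hnm.
    apply NNPP; intro; apply H'; eauto. }
  destruct (choice _ Hesc) as [phi Hphi].
  set (Z := fun g => g <> x /\ exists m, g = s (phi m)).
  assert (HZ : kw_open (fun g => ~ Z g)).
  { apply kw_closed_finite_traces. intros j. exists (map (fun m => s (phi m)) (seq 0 j)).
    intros g Hg [_ [m ->]]. apply in_map_iff. exists m. split; auto. apply in_seq.
    destruct (Nat.lt_ge_cases m j); [lia|]. exfalso.
    apply (proj2 (Hphi m)), words_le_mono with j; auto. }
  destruct (Hc _ HZ) as [N HN]; [intros [Hxx _]; auto|].
  destruct (words_le_some x) as [m0 Hm0].
  set (m := Nat.max N m0).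
  destruct (Hphi m) as [H1 H2]. apply (HN (phi m)); [lia|]. split.
  - intros E. apply H2. rewrite E. apply words_le_mono with m0; auto. lia.
  - exists m; auto.
Qed.

Lemma convergent_coord s x A : converges kw_open s x ->
  exists N, forall n, N <= n -> coord (s n) A = coord x A.
Proof.
  intros Hc. apply (Hc (fun g => coord g A = coord x A)); auto.
  apply kw_open_of_pw, pw_open_coord.
Qed.

Lemma bounded_nonzero_not_null M (P : nat -> Prop) (g : nat -> bgroup) : infinite P ->
  (forall k, P k -> g k <> bzero /\ words_le M (g k)) ->
  exists A, infinite (fun k => P k /\ coord (g k) A = true).
Proof.
  intros HP Hg.
  assert (Hword : forall k, exists w, P k -> NoDup w /\ Forall is_ultrafilter w /\ w <> [] /\
                    length w <= M /\ coord (g k) = word_eval w).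
  { intros k. destruct (classic (P k)) as [Pk|Pk]; [|exists []; tauto].
    destruct (Hg k Pk) as [Hne [w [Fw [Lw Ew]]]].
    destruct (word_reduce w Fw) as [w' [N' [F' [L' E']]]].
    exists w'. intros _. split; [auto|split; [auto|split; [|split; [lia|]]]].
    - intros ->. apply Hne, bgroup_ext. intros A. rewrite Ew, <- E'. reflexivity.
    - rewrite Ew. apply functional_extensionality; auto. }
  destruct (choice _ Hword) as [F HF].
  destruct (reduced_words_not_null M P F HP) as [A HA].
  - intros k Pk. destruct (HF k Pk) as [? [? [? [? _]]]]. auto.
  - exists A. intros N. destruct (HA N) as [k [Hk [Pk E]]].
    exists k. split; auto. split; auto. rewrite (proj2 (proj2 (proj2 (proj2 (HF k Pk))))). auto.
Qed.

(* In particular the group has no nontrivial convergent sequences. *)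
Lemma convergent_frequently_at_limit s x : converges kw_open s x ->
  forall m, exists n, m <= n /\ s n = x.
Proof.
  intros Hc m0. apply NNPP; intro Hn.
  destruct (convergent_eventually_bounded s x Hc) as [m [N HN]].
  destruct (words_le_some x) as [m1 Hm1].
  destruct (bounded_nonzero_not_null (m + m1) (fun n => Nat.max m0 N <= n)
              (fun n => bmul (s n) x)) as [A HA].
  - intros N'. exists (Nat.max N' (Nat.max m0 N)). split; lia.
  - intros k Hk. split.
    + intros E. apply Hn. exists k. split; [lia|].
      apply bgroup_ext. intros A. pose proof (f_equal (fun g => coord g A) E) as EA.
      cbv beta in EA. rewrite coord_bmul, coord_bzero in EA.
      destruct (coord (s k) A), (coord x A); simpl in *; congruence.
    + apply words_le_bmul; auto. apply HN; lia.
  - destruct (convergent_coord s x A Hc) as [N2 HN2].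
    destruct (HA N2) as [k [Hk [_ Hs]]].
    rewrite coord_bmul, (HN2 k Hk), xorb_nilpotent in Hs. discriminate.
Qed.

Lemma kw_countable_cs_star_character : countable_cs_star_character kw_open.
Proof.
  intros x. exists (fun _ g => g = x). intros s O Hc HO Ox.
  exists (fun g => g = x). split; [exists 0; auto|]. split; [auto|]. split; [intros y ->; auto|].
  intros m. destruct (convergent_frequently_at_limit s x Hc m) as [n [Hn E]]. eauto.
Qed.

Lemma infinite_refine_atoms (B : list natset) (Z : nat -> Prop) : infinite Z ->
  exists Z', infinite Z' /\ (forall k, Z' k -> Z k) /\
    forall A, In A B -> forall a b, Z' a -> Z' b -> (A a <-> A b).
Proof.
  induction B as [|A B IH]; intros HZ.
  - exists Z. split; [auto|split; [auto|intros A0 []]].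
  - destruct (IH HZ) as [Z1 [H1 [H2 H3]]].
    destruct (classic (infinite (fun k => Z1 k /\ A k))) as [HA|HA].
    + exists (fun k => Z1 k /\ A k). split; [exact HA|split; [intros k [a _]; auto|]].
      intros A' [<-|HA'] a b [a1 a2] [b1 b2]; [tauto|apply H3; auto].
    + destruct (not_infinite _ HA) as [N HN].
      exists (fun k => Z1 k /\ N <= k). split; [|split; [intros k [a _]; auto|]].
      * intros M. destruct (H1 (Nat.max M N)) as [k [Hk Zk]].
        exists k. split; [lia|split; auto; lia].
      * intros A' [<-|HA'] a b [a1 a2] [b1 b2]; [|apply H3; auto].
        split; intro; exfalso; [apply (HN a)|apply (HN b)]; auto.
Qed.

Lemma atoms_collide (B : list natset) : exists a b, a <> b /\ forall A, In A B -> (A a <-> A b).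
Proof.
  destruct (infinite_refine_atoms B (fun _ => True)) as [Z [HZ [_ H]]];
    [intros N; exists N; auto|].
  destruct (HZ 0) as [a [_ Za]]. destruct (HZ (S a)) as [b [Hb Zb]].
  exists a, b. split; [lia|]. intros A HA. apply H; auto.
Qed.

(* The nonzero elements form a sequentially closed set, but 0 lies in the closure of its
   trace on A_2(βℕ): any basic neighbourhood of 0 contains p_a + p_b for principal
   ultrafilters at two points a ≠ b lying in the same atom. *)
Lemma kw_not_sequential : ~ sequential kw_open.
Proof.
  intros Hs.
  assert (Hcl : is_closed kw_open (fun g => g <> bzero)).
  { apply Hs. intros s x Hsx Hc. destruct (convergent_frequently_at_limit s x Hc 0) as [n [_ <-]].
    auto. }
  destruct (Hcl 2) as [V [HV EV]].
  assert (Vz : V bzero) by (apply EV; [apply words_le_zero|tauto]).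
  destruct (HV bzero Vz) as [B HB].
  destruct (atoms_collide B) as [a [b [Hab Hatom]]].
  set (w := [(fun A : natset => A a); (fun A : natset => A b)]).
  assert (Hw : Forall is_ultrafilter w)
    by (constructor; [|constructor; [|constructor]]; apply principal_ultrafilter).
  set (g := word_elt w Hw).
  assert (Kg : words_le 2 g) by (exists w; simpl; auto).
  assert (Vg : V g).
  { apply HB. intros A HA. rewrite coord_bzero.
    cbn [g coord proj1_sig word_elt w word_eval fold_right].
    rewrite (truth_iff (A b) (A a)) by (symmetry; apply Hatom; auto).
    destruct (truth (A a)); reflexivity. }
  apply (proj2 (EV g Kg)) in Vg. apply Vg. intros E.
  pose proof (f_equal (fun h => coord h (fun n => n = a)) E) as Ea.
  cbn [g coord proj1_sig word_elt w word_eval fold_right] in Ea.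
  rewrite (proj2 (truth_true (a = a))), (proj2 (truth_false (b = a))) in Ea by auto.
  discriminate.
Qed.

Theorem mainTheorem11 :
  exists (G : Type) (op : (G -> Prop) -> Prop)
         (mul : G -> G -> G) (inv : G -> G) (e : G),
    topological_group op mul inv e /\
    k_space op /\
    countable_cs_star_character op /\
    ~ sequential op.
Proof.
  exists bgroup, kw_open, bmul, (fun g => g), bzero.
  split; [exact kw_topological_group|].
  split; [exact kw_k_space|].
  split; [exact kw_countable_cs_star_character|exact kw_not_sequential].
Qed.
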